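(* Let $V$ be an $n$-dimensional complex vector space and $P\subset V\oplus V$ a linear relation with $\dim P=n$. Then: (a) $\lambda^m(P)\neq0$ if and only if $\dim\mathrm{Indef}\,P\le m\le\dim\mathrm{Im}\,P$. (b) If $m=\dim\mathrm{Indef}\,P$, then $\mathrm{rk}\,\lambda^m(P)=1$, and $\lambda^m(P)=\lambda^m(Q)$ (up to a nonzero factor) for any linear relation $Q$ with $\dim Q=n$, $\mathrm{Indef}\,Q=\mathrm{Indef}\,P$, $\mathrm{Dom}\,Q=\mathrm{Dom}\,P$; in particular one may take $Q=\mathrm{Dom}\,P\oplus\mathrm{Indef}\,P$. (c) If $m=\dim\mathrm{Im}\,P$, then $\mathrm{rk}\,\lambda^m(P)=1$, and $\lambda^m(P)=\lambda^m(R)$ (up to a nonzero factor) for any linear relation $R$ with $\dim R=n$, $\mathrm{Im}\,R=\mathrm{Im}\,P$, $\mathrm{Ker}\,R=\mathrm{Ker}\,P$; in particular one may take $R=\mathrm{Ker}\,P\oplus\mathrm{Im}\,P$.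
   Context: A linear relation $P:V\rightrightarrows V$ is a linear subspace $P\subset V\oplus V$. $\mathrm{Ker}\,P=\{v: v\oplus0\in P\}$, $\mathrm{Dom}\,P$ is the projection of $P$ onto the first summand, $\mathrm{Im}\,P$ the projection onto the second summand, $\mathrm{Indef}\,P=\{w:0\oplus w\in P\}$. If $\dim P=n$, there exist bases $f_1,\dots,f_a,g_1,\dots,g_b,h_1,\dots,h_c$ and $F_1,\dots,F_a,G_1,\dots,G_b,H_1,\dots,H_c$ of $V$ such that $P$ is spanned by the vectors $0\oplus F_i$, $g_j\oplus G_j$, $h_k\oplus0$. The operator $\lambda(P):\Lambda V\to\Lambda V$ sends $f_1\wedge\dots\wedge f_a\wedge g_{i_1}\wedge\dots\wedge g_{i_s}$ (for $i_1<\dots<i_s$) to $F_1\wedge\dots\wedge F_a\wedge G_{i_1}\wedge\dots\wedge G_{i_s}$ and annihilates all other wedge monomials in the basis $f,g,h$; it depends on the choice of bases only up to a nonzero scalar factor. $\lambda^m(P)$ is the restriction of $\lambda(P)$ to $\Lambda^mV\to\Lambda^mV$. Equalities between such operators are understood up to a nonzero scalar factor. *)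

From HB Require Import structures.
From mathcomp Require Import all_boot all_order all_algebra.
Set Implicit Arguments. Unset Strict Implicit. Unset Printing Implicit Defensive.
Import GRing.Theory.
Local Open Scope ring_scope.

(* V = 'rV[F]_n (row vectors); V (+) V = 'rV[F]_(n + n).
   A linear relation P is represented by a matrix whose ROW SPACE is P. *)

Section LinRel.
Variable F : fieldType.
Variable n : nat.

Definition Dom k (P : 'M[F]_(k, n + n)) : 'M[F]_(k, n) := lsubmx P.
Definition Im k (P : 'M[F]_(k, n + n)) : 'M[F]_(k, n) := rsubmx P.
(* Ker P = { v | v (+) 0 \in P } : first component of P /\ (V (+) 0) *)
Definition Ker k (P : 'M[F]_(k, n + n)) : 'M[F]_(n + n, n) :=
  lsubmx (P :&: row_mx (1%:M : 'M[F]_n) (0 : 'M[F]_n))%MS.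
(* Indef P = { w | 0 (+) w \in P } : second component of P /\ (0 (+) V) *)
Definition Indef k (P : 'M[F]_(k, n + n)) : 'M[F]_(n + n, n) :=
  rsubmx (P :&: row_mx (0 : 'M[F]_n) (1%:M : 'M[F]_n))%MS.

Definition DomIndef k (P : 'M[F]_(k, n + n)) :=
  col_mx (row_mx (Dom P) 0) (row_mx 0 (Indef P)).
Definition KerIm k (P : 'M[F]_(k, n + n)) :=
  col_mx (row_mx (Ker P) 0) (row_mx 0 (Im P)).

(* The rows of B are f_1..f_a, g_1..g_b, h_1..h_c and the rows
   of B' are F_1..F_a, G_1..G_b, H_1..H_c (c = n - a - b).  The generators of P
   are 0(+)F_i, g_j(+)G_j, h_l(+)0, i.e. row i of the matrix below. *)
Definition adapted_gen (a b : nat) (B B' : 'M[F]_n) : 'M[F]_(n, n + n) :=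
  row_mx (diag_mx (\row_(i < n) ((a <= i)%N)%:R) *m B)
         (diag_mx (\row_(i < n) ((i < a + b)%N)%:R) *m B').

Definition adapted k (P : 'M[F]_(k, n + n)) (a b : nat) (B B' : 'M[F]_n) :=
  [&& (a + b <= n)%N, B \in unitmx, B' \in unitmx &
      (adapted_gen a b B B' == P)%MS].

(* Basis of Lambda^m V: e_{s 0} /\ ... /\ e_{s (m-1)} for strictly increasing s *)
Definition incr m (s : {ffun 'I_m -> 'I_n}) :=
  [forall i : 'I_m, forall j : 'I_m, (i < j)%N ==> (s i < s j)%N].

Definition wb m := {s : {ffun 'I_m -> 'I_n} | incr s}.

(* m-th compound matrix: coordinate at U of the wedge of the rows T of A *)
Definition compound m (A : 'M[F]_n) (T U : wb m) : F :=
  \det (\matrix_(i < m, j < m) A (val T i) (val U j)).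

(* the monomial indexed by T (in the basis f,g,h) is of the form
   f_1 /\ .. /\ f_a /\ g_{i1} /\ .. /\ g_{is} *)
Definition selected (a b : nat) m (T : wb m) :=
  [forall i : 'I_n, (i < a)%N ==> [exists j, val T j == i]] &&
  [forall j : 'I_m, (val T j < a + b)%N].

(* Coefficients of lambda^m(P) in the standard basis of Lambda^m V
   (acting on row vectors):  comp(B^-1) * diag(selected) * comp(B'). *)
Definition lamf (a b : nat) (B B' : 'M[F]_n) m (S U : wb m) : F :=
  \sum_(T : wb m) compound (invmx B) S T *
                  (if selected a b T then compound B' T U else 0).

Definition lam (a b : nat) (B B' : 'M[F]_n) m : 'M[F]_#|{: wb m}| :=
  \matrix_(i, j) lamf a b B B' (enum_val i) (enum_val j).

Definition lam_nonzero_iff m k (P : 'M[F]_(k, n + n)) (cond : bool) :=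
  forall a b B B', adapted P a b B B' -> (lam a b B B' m != 0) = cond.

Definition lam_rank1 m k (P : 'M[F]_(k, n + n)) :=
  forall a b B B', adapted P a b B B' -> \rank (lam a b B B' m) = 1%N.

Definition lam_prop m k (P : 'M[F]_(k, n + n)) k' (Q : 'M[F]_(k', n + n)) :=
  forall a b B B' a' b' C C', adapted P a b B B' -> adapted Q a' b' C C' ->
    exists2 c : F, c != 0 & lam a b B B' m = c *: lam a' b' C C' m.

End LinRel.

(* With respect to adapted bases B, B', the matrix of lambda^m(P) factors as
   C(B^-1) D C(B'), where C is the m-th compound matrix (multiplicative by
   Cauchy-Binet, hence invertible on invertible matrices) and D is the
   diagonal 0/1 matrix of the index sets T of size m with
   {1..a} <= T <= {1..a+b}.  Such T exist iff a <= m <= a + b, and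
   a = dim Indef P, a + b = dim Im P.  For m = a, resp. m = a + b, the only
   such T is the initial segment {1..m}, so lambda^m(P) is the rank one
   product of the maximal minors of the first m columns of B^-1 and of the
   first m rows of B'.  These rows span Indef P, resp. Im P, and these columns
   span the annihilator of Dom P, resp. Ker P; maximal minors of two bases of
   the same subspace are proportional. *)

From HB Require Import structures.
From mathcomp Require Import all_boot all_order all_algebra fingroup perm.
Import GRing.Theory.
Local Open Scope ring_scope.
Set Implicit Arguments. Unset Strict Implicit. Unset Printing Implicit Defensive.

Section IncreasingMaps.
Variables n m : nat.
Implicit Types s S U : {ffun 'I_m -> 'I_n}.

Lemma incr_ltn s : incr s -> forall i j, (s i < s j)%N = (i < j)%N.
Proof.
move=> /forallP s_incr i j.
have lt_s (x y : 'I_m) : (x < y)%N -> (s x < s y)%N.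
  by move/forallP: (s_incr x) => /(_ y)/implyP.
case: (ltngtP i j) => [/lt_s -> // | /lt_s ji | /val_inj -> ]; last by rewrite ltnn.
by apply/negbTE; rewrite -leqNgt ltnW.
Qed.

Lemma incr_inj s : incr s -> injective s.
Proof.
move=> s_incr i j eq_ij; apply/val_inj.
have := incr_ltn s_incr i j; have := incr_ltn s_incr j i.
by rewrite eq_ij ltnn; case: ltngtP.
Qed.

Lemma sorted_codom_incr s : incr s -> sorted (fun x y : 'I_n => (x < y)%N) (codom s).
Proof.
move=> s_incr; rewrite codomE sorted_map.
apply: (@sub_sorted _ (fun i j : 'I_m => (i < j)%N)) => [i j|].
  by rewrite /= incr_ltn.
by rewrite -(@sorted_map _ _ val ltn) val_enum_ord iota_ltn_sorted.
Qed.

Lemma incr_codom_subset S U : incr S -> incr U -> codom S \subset codom U -> S = U.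
Proof.
move=> S_incr U_incr sSU.
have card_m s : incr s -> #|codom s| = m by move=> /incr_inj/card_codom->; rewrite card_ord.
have /subset_cardP/(_ sSU) eqSU : #|codom S| = #|codom U| by rewrite !card_m.
have ltn_tr : transitive (fun x y : 'I_n => (x < y)%N) by move=> ? ? ?; apply: ltn_trans.
have eq_codom := irr_sorted_eq ltn_tr (fun x => ltnn x) (sorted_codom_incr S_incr)
  (sorted_codom_incr U_incr) eqSU.
by apply/(can_inj fgraphK)/val_inj; rewrite !fgraph_codom.
Qed.

Lemma incr_perm_decomp (f : 'I_m -> 'I_n) : injective f ->
  exists (T : wb n m) (s : 'S_m), forall i, f i = val T (s i).
Proof.
move=> f_inj; set e := [seq x <- enum 'I_n | x \in codom f].
have mem_e x : (x \in e) = (x \in codom f) by rewrite mem_filter mem_enum andbT.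
have f_e i : f i \in e by rewrite mem_e codom_f.
have size_e : size e = m.
  rewrite -(card_ord m) -(card_codom f_inj) -(card_uniqP _); last first.
    by rewrite filter_uniq ?enum_uniq.
  exact: eq_card.
have ltn_tr : transitive (relpre (@nat_of_ord n) ltn) by move=> ? ? ?; apply: ltn_trans.
have sorted_e : sorted (relpre (@nat_of_ord n) ltn) e.
  apply: (sorted_filter ltn_tr).
  by rewrite -(@sorted_map _ _ val ltn) val_enum_ord iota_ltn_sorted.
pose T := [ffun i : 'I_m => nth (f i) e i].
have T_incr : incr T.
  apply/forallP => i; apply/forallP => j; apply/implyP => ij; rewrite !ffunE.
  rewrite (set_nth_default (f i) (f j)) ?size_e //.
  by apply: (sorted_ltn_nth ltn_tr); rewrite ?inE ?size_e.
have index_lt i : (index (f i) e < m)%N by rewrite -size_e index_mem.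
pose g i := Ordinal (index_lt i).
have g_inj : injective g.
  move=> i j /(congr1 val) /= eq_ij; apply: f_inj.
  by rewrite -(nth_index (f i) (f_e i)) eq_ij nth_index.
exists (exist _ T T_incr), (perm g_inj) => i.
by rewrite /= permE ffunE nth_index.
Qed.

End IncreasingMaps.

Section CauchyBinet.
Variable F : fieldType.

Lemma det_mulmx_sum_ffun p n (X : 'M[F]_(p, n)) (Y : 'M[F]_(n, p)) :
  \det (X *m Y) = \sum_(f : {ffun 'I_p -> 'I_n}) (\prod_i X i (f i)) * \det (rowsub f Y).
Proof.
transitivity (\sum_(s : 'S_p) \sum_(f : {ffun 'I_p -> 'I_n})
     (-1) ^+ s * \prod_i (X i (f i) * Y (f i) (s i))).
  apply: eq_bigr => s _; rewrite -big_distrr /=; congr (_ * _).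
  rewrite -(bigA_distr_bigA (fun i k => X i k * Y k (s i))) /=.
  by apply: eq_bigr => i _; rewrite mxE.
rewrite exchange_big; apply: eq_bigr => f _.
rewrite /(\det _) big_distrr /=; apply: eq_bigr => s _.
rewrite big_split /= mulrCA; congr (_ * (_ * _)).
by apply: eq_bigr => i _; rewrite mxE.
Qed.

Lemma det_mulmx_sum_inj p n (X : 'M[F]_(p, n)) (Y : 'M[F]_(n, p)) :
  \det (X *m Y) =
  \sum_(f : {ffun 'I_p -> 'I_n} | injectiveb f) (\prod_i X i (f i)) * \det (rowsub f Y).
Proof.
rewrite det_mulmx_sum_ffun (bigID (fun f : {ffun 'I_p -> 'I_n} => injectiveb f)) /=.
rewrite [X in _ + X]big1 ?addr0 // => f /injectivePn [i1 [i2 Di12 Ef12]].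
by rewrite (determinant_alternate Di12) ?mulr0 // => j; rewrite !mxE Ef12.
Qed.

Definition incr_comp_perm n p (Ts : wb n p * 'S_p) : {ffun 'I_p -> 'I_n} :=
  [ffun i => val Ts.1 (Ts.2 i)].

Lemma incr_comp_perm_inj n p : injective (@incr_comp_perm n p).
Proof.
move=> [T s] [T' s'] /ffunP /= eqTs.
have eq_at i : val T i = val T' (s' (s^-1 i))%g.
  by move: (eqTs (s^-1 i)%g); rewrite !ffunE permKV.
have eqT : T = T'.
  apply/val_inj/incr_codom_subset; try exact: valP.
  by apply/subsetP => _ /codomP [i ->]; rewrite eq_at codom_f.
subst T'; congr pair; apply/permP => i.
by apply: (incr_inj (valP T)); move: (eqTs i); rewrite !ffunE.
Qed.

Lemma injectiveb_incr_comp_perm n p :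
  [set f : {ffun 'I_p -> 'I_n} | injectiveb f] = @incr_comp_perm n p @: setT.
Proof.
apply/setP => f; rewrite inE; apply/injectiveP/imsetP => [f_inj | [[T s] _ ->]].
  have [T [s eq_f]] := incr_perm_decomp f_inj.
  by exists (T, s) => //; apply/ffunP => i; rewrite ffunE.
by move=> i j; rewrite !ffunE => /(incr_inj (valP T))/perm_inj.
Qed.

Lemma cauchy_binet p n (X : 'M[F]_(p, n)) (Y : 'M[F]_(n, p)) :
  \det (X *m Y) = \sum_(T : wb n p) \det (colsub (val T) X) * \det (rowsub (val T) Y).
Proof.
rewrite det_mulmx_sum_inj.
rewrite (eq_bigl [in [set f : {ffun 'I_p -> 'I_n} | injectiveb f]]); last first.
  by move=> f; rewrite inE.
rewrite injectiveb_incr_comp_perm big_imset /=; last first.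
  by move=> x y _ _; apply: incr_comp_perm_inj.
rewrite (eq_bigl predT); last by move=> Ts; rewrite inE.
pose G (Ts : wb n p * 'S_p) :=
  \prod_i X i (incr_comp_perm Ts i) * \det (rowsub (incr_comp_perm Ts) Y).
rewrite -/(\sum_Ts G Ts).
transitivity (\sum_T \sum_(s : 'S_p) G (T, s)).
  by rewrite pair_bigA; apply: eq_bigr => [[T s]].
apply: eq_bigr => T _.
rewrite /(\det (colsub _ _)) big_distrl /=; apply: eq_bigr => s _; rewrite /G.
have -> : rowsub (incr_comp_perm (T, s)) Y = row_perm s (rowsub (val T) Y).
  by apply/matrixP => i j; rewrite !mxE ffunE.
rewrite row_permE det_mulmx det_perm mulrA [_ * (-1) ^+ s]mulrC.
by congr (_ * _ * _); apply: eq_bigr => i _; rewrite mxE ffunE.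
Qed.

End CauchyBinet.

Section CompoundMatrix.
Variables (F : fieldType) (n m : nat).

Definition compound_mx (A : 'M[F]_n) : 'M[F]_#|{: wb n m}| :=
  \matrix_(i, j) compound A (enum_val i) (enum_val j).

Lemma big_wb_enum_val (G : wb n m -> F) :
  \sum_(T : wb n m) G T = \sum_(k < #|{: wb n m}|) G (enum_val k).
Proof. by rewrite -big_enum_val; apply: eq_bigl => x; rewrite inE. Qed.

Lemma compound_mxM (A B : 'M[F]_n) : compound_mx (A *m B) = compound_mx A *m compound_mx B.
Proof.
apply/matrixP => i j; rewrite !mxE /compound.
have -> : \matrix_(i0, j0) (A *m B) (val (enum_val i) i0) (val (enum_val j) j0) =
          rowsub (val (enum_val i)) A *m colsub (val (enum_val j)) B.
  by rewrite -mxsub_mul; apply/matrixP => x y; rewrite !mxE.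
rewrite cauchy_binet big_wb_enum_val; apply: eq_bigr => k _; rewrite !mxE /compound /=.
by congr (_ * _); congr (\det _); apply/matrixP => x y; rewrite !mxE.
Qed.

Lemma compound_mx1 : compound_mx 1%:M = 1%:M.
Proof.
apply/matrixP => i j; rewrite !mxE /compound.
have [<-|neq_ij] := eqVneq i j.
  rewrite (_ : \matrix_(_, _) _ = 1%:M) ?det1 //; apply/matrixP => x y.
  by rewrite !mxE (inj_eq (incr_inj (valP (enum_val i)))).
set S := enum_val i; set U := enum_val j.
have [b Ub_notin | codomU] := pickP (fun b => val U b \notin codom (val S)).
  rewrite (expand_det_col _ b) big1 // => a _; rewrite !mxE.
  case: eqP => [Sa_Ub | _]; last by rewrite mul0r.
  by rewrite -Sa_Ub codom_f in Ub_notin.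
have /val_inj/enum_val_inj eq_ij : val U = val S.
  apply: incr_codom_subset; try exact: valP.
  by apply/subsetP => _ /codomP [b ->]; apply/negbNE/negbT/codomU.
by rewrite eq_ij eqxx in neq_ij.
Qed.

Lemma compound_mx_unit (A : 'M[F]_n) : A \in unitmx -> compound_mx A \in unitmx.
Proof.
move=> A_unit; have := compound_mxM A (invmx A).
by rewrite mulmxV // compound_mx1 => /esym/mulmx1_unit [].
Qed.

Definition selection_mx a b : 'M[F]_#|{: wb n m}| :=
  diag_mx (\row_k (selected a b (enum_val k))%:R).

Lemma lamE a b (B B' : 'M[F]_n) :
  lam a b B B' m = compound_mx (invmx B) *m selection_mx a b *m compound_mx B'.
Proof.
apply/matrixP => i j; rewrite !mxE /lamf big_wb_enum_val; apply: eq_bigr => k _.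
by rewrite mul_mx_diag !mxE; case: selected; rewrite ?mulr1 ?mulr0 ?mul0r.
Qed.

Lemma rank_lam a b (B B' : 'M[F]_n) : B \in unitmx -> B' \in unitmx ->
  \rank (lam a b B B' m) = \rank (selection_mx a b).
Proof.
move=> B_unit B'_unit.
rewrite lamE mxrankMfree ?row_free_unit ?compound_mx_unit //.
by rewrite eqmxMfull // row_full_unit compound_mx_unit ?unitmx_inv.
Qed.

Lemma selection_mx_eq0 a b :
  (selection_mx a b == 0) = ~~ [exists T : wb n m, selected a b T].
Proof.
apply/eqP/existsPn => [/matrixP sel0 T | sel0].
  move: (sel0 (enum_rank T) (enum_rank T)).
  rewrite !mxE eqxx mulr1n enum_rankK.
  by case: selected => //= /eqP; rewrite oner_eq0.
by apply/matrixP => x y; rewrite !mxE (negbTE (sel0 _)) mul0rn.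
Qed.

Lemma selection_mx_delta a b T0 : (forall T : wb n m, selected a b T = (T == T0)) ->
  selection_mx a b = delta_mx (enum_rank T0) (enum_rank T0).
Proof.
move=> selT0; apply/matrixP => x y; rewrite !mxE selT0.
rewrite -(inj_eq enum_rank_inj) enum_valK.
have [<-|neq_xy] := eqVneq x y; first by rewrite andbb.
rewrite mulr0n; have [x_T0|] //= := eqVneq x (enum_rank T0).
by rewrite -x_T0 eq_sym (negbTE neq_xy).
Qed.

End CompoundMatrix.

Section InitialSegment.
Variable n : nat.

Lemma card_codom_wb m (T : wb n m) : #|codom (val T)| = m.
Proof. by rewrite card_codom ?card_ord //; apply/incr_inj/valP. Qed.

Lemma incr_widen_ord r (rn : (r <= n)%N) : incr [ffun i => widen_ord rn i].
Proof. by apply/forallP => i; apply/forallP => j; apply/implyP; rewrite !ffunE. Qed.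

Definition init_wb r (rn : (r <= n)%N) : wb n r :=
  exist (fun s => incr s) _ (incr_widen_ord rn).

Lemma mem_codom_init_wb r (rn : (r <= n)%N) (y : 'I_n) :
  (y \in codom (val (init_wb rn))) = (y < r)%N.
Proof.
apply/codomP/idP => [[i ->] | yr]; first by rewrite ffunE /= ltn_ord.
by exists (Ordinal yr); rewrite ffunE; apply: val_inj.
Qed.

Lemma init_wb_subset r (rn : (r <= n)%N) m (T : wb n m) :
  (codom (val (init_wb rn)) \subset codom (val T)) =
  [forall i : 'I_n, (i < r)%N ==> [exists j, val T j == i]].
Proof.
apply/subsetP/forallP => [sub i | sub i]; last first.
  rewrite mem_codom_init_wb => /(implyP (sub i))/existsP [j /eqP <-].
  exact: codom_f.
apply/implyP; rewrite -mem_codom_init_wb => /sub/codomP [j ->].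
by apply/existsP; exists j.
Qed.

Lemma subset_init_wb r (rn : (r <= n)%N) m (T : wb n m) :
  (codom (val T) \subset codom (val (init_wb rn))) = [forall j, (val T j < r)%N].
Proof.
apply/subsetP/forallP => [sub j | sub _ /codomP [j ->]].
  by rewrite -mem_codom_init_wb sub ?codom_f.
by rewrite mem_codom_init_wb.
Qed.

Section Selected.
Variables (a b : nat) (an : (a <= n)%N) (abn : (a + b <= n)%N).

Lemma selectedE m (T : wb n m) : selected a b T =
  (codom (val (init_wb an)) \subset codom (val T)) &&
  (codom (val T) \subset codom (val (init_wb abn))).
Proof. by rewrite init_wb_subset subset_init_wb. Qed.

Lemma selected_bounds m (T : wb n m) : selected a b T -> (a <= m <= a + b)%N.
Proof.
rewrite selectedE => /andP [/subset_leq_card le_a /subset_leq_card le_ab].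
by rewrite !card_codom_wb in le_a le_ab; rewrite le_a le_ab.
Qed.

Lemma selected_init m (mn : (m <= n)%N) : (a <= m <= a + b)%N -> selected a b (init_wb mn).
Proof.
case/andP => am mab; rewrite selectedE; apply/andP; split; apply/subsetP => y.
  by rewrite !mem_codom_init_wb => /leq_trans; apply.
by rewrite !mem_codom_init_wb => /leq_trans; apply.
Qed.

Lemma selected_bottom m (mn : (m <= n)%N) (T : wb n m) :
  m = a -> selected a b T = (T == init_wb mn).
Proof.
move=> ma; apply/idP/eqP => [|->]; last by apply: selected_init; rewrite ma leqnn leq_addr.
rewrite selectedE => /andP [sub _]; apply/esym/val_inj/incr_codom_subset; try exact: valP.
by apply: subset_trans sub; apply/subsetP => y; rewrite !mem_codom_init_wb ma.
Qed.

Lemma selected_top m (mn : (m <= n)%N) (T : wb n m) :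
  m = (a + b)%N -> selected a b T = (T == init_wb mn).
Proof.
move=> mab; apply/idP/eqP => [|->]; last by apply: selected_init; rewrite mab leqnn leq_addr.
rewrite selectedE => /andP [_ sub]; apply/val_inj/incr_codom_subset; try exact: valP.
by apply: subset_trans sub _; apply/subsetP => y; rewrite !mem_codom_init_wb mab.
Qed.

End Selected.

End InitialSegment.

Section LinearRelation.
Variables (F : fieldType) (n : nat).
Implicit Types k p : nat.

Lemma lsubmx_eqmx k p (X : 'M[F]_(k, n + n)) (Y : 'M[F]_(p, n + n)) :
  (X == Y)%MS -> (lsubmx X == lsubmx Y)%MS.
Proof.
have sub k1 k2 (A : 'M[F]_(k1, n + n)) (B : 'M[F]_(k2, n + n)) :
    (A <= B)%MS -> (lsubmx A <= lsubmx B)%MS.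
  by case/submxP => K ->; rewrite -mulmx_lsub submxMl.
by case/andP => /sub-> /sub->.
Qed.

Lemma rsubmx_eqmx k p (X : 'M[F]_(k, n + n)) (Y : 'M[F]_(p, n + n)) :
  (X == Y)%MS -> (rsubmx X == rsubmx Y)%MS.
Proof.
have sub k1 k2 (A : 'M[F]_(k1, n + n)) (B : 'M[F]_(k2, n + n)) :
    (A <= B)%MS -> (rsubmx A <= rsubmx B)%MS.
  by case/submxP => K ->; rewrite -mulmx_rsub submxMl.
by case/andP => /sub-> /sub->.
Qed.

Lemma Indef_eqmx k p (M : 'M[F]_(k, n + n)) (X : 'M[F]_(p, n)) :
  (row_mx 0 X <= M)%MS ->
  (forall v : 'rV_(n + n), (v <= M)%MS -> lsubmx v = 0 -> (v <= row_mx 0 X)%MS) ->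
  (Indef M == X)%MS.
Proof.
move=> XM MX; set C := (M :&: row_mx 0 1%:M)%MS.
suff /rsubmx_eqmx : (C == row_mx 0 X)%MS by rewrite row_mxKr.
apply/andP; split.
  apply/row_subP => i; apply: MX; first exact: submx_trans (row_sub i C) (capmxSl _ _).
  have /submxP [L ->] := submx_trans (row_sub i C) (capmxSr M (row_mx 0 1%:M)).
  by rewrite mul_mx_row mulmx0 row_mxKl.
rewrite sub_capmx XM -[X in row_mx _ X]mulmx1 -(mulmx0 _ X) -mul_mx_row.
exact: submxMl.
Qed.

Lemma Ker_eqmx k p (M : 'M[F]_(k, n + n)) (X : 'M[F]_(p, n)) :
  (row_mx X 0 <= M)%MS ->
  (forall v : 'rV_(n + n), (v <= M)%MS -> rsubmx v = 0 -> (v <= row_mx X 0)%MS) ->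
  (Ker M == X)%MS.
Proof.
move=> XM MX; set C := (M :&: row_mx 1%:M 0)%MS.
suff /lsubmx_eqmx : (C == row_mx X 0)%MS by rewrite row_mxKl.
apply/andP; split.
  apply/row_subP => i; apply: MX; first exact: submx_trans (row_sub i C) (capmxSl _ _).
  have /submxP [L ->] := submx_trans (row_sub i C) (capmxSr M (row_mx 1%:M 0)).
  by rewrite mul_mx_row mulmx0 row_mxKr.
rewrite sub_capmx XM -[X in row_mx X _]mulmx1 -(mulmx0 _ X) -mul_mx_row.
exact: submxMl.
Qed.

Lemma mxrank_rsubmx_sub k (C : 'M[F]_(k, n + n)) :
  (C <= row_mx 0 1%:M)%MS -> \rank (rsubmx C) = \rank C.
Proof.
by case/submxP => L ->; rewrite mul_mx_row mulmx0 mulmx1 row_mxKr rank_row_0mx.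
Qed.

Lemma mxrank_lsubmx_sub k (C : 'M[F]_(k, n + n)) :
  (C <= row_mx 1%:M 0)%MS -> \rank (lsubmx C) = \rank C.
Proof.
by case/submxP => L ->; rewrite mul_mx_row mulmx0 mulmx1 row_mxKl rank_row_mx0.
Qed.

Lemma mxrank_Dom_Indef k (P : 'M[F]_(k, n + n)) :
  (\rank (Dom P) + \rank (Indef P))%N = \rank P.
Proof.
pose E : 'M[F]_(n + n, n) := col_mx 1%:M 0.
have PE : P *m E = Dom P by rewrite -{1}(hsubmxK P) mul_row_col mulmx1 mulmx0 addr0.
have kerE : (row_mx 0 1%:M == kermx E)%MS.
  have sub : (row_mx 0 1%:M <= kermx E)%MS.
    by apply/sub_kermxP; rewrite mul_row_col mulmx1 mulmx0 addr0.
  rewrite -(mxrank_leqif_eq sub).2 mxrank_ker rank_col_mx0 rank_row_0mx !mxrank1.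
  by rewrite addnK.
rewrite -(mxrank_mul_ker P E) PE /Indef mxrank_rsubmx_sub ?capmxSr //.
by congr addn; apply/eqmx_rank/eqmxP; apply: cap_eqmx => //; apply/eqmxP.
Qed.

Lemma mxrank_Im_Ker k (P : 'M[F]_(k, n + n)) :
  (\rank (Im P) + \rank (Ker P))%N = \rank P.
Proof.
pose E : 'M[F]_(n + n, n) := col_mx 0 1%:M.
have PE : P *m E = Im P by rewrite -{1}(hsubmxK P) mul_row_col mulmx1 mulmx0 add0r.
have kerE : (row_mx 1%:M 0 == kermx E)%MS.
  have sub : (row_mx 1%:M 0 <= kermx E)%MS.
    by apply/sub_kermxP; rewrite mul_row_col mulmx1 mulmx0 addr0.
  rewrite -(mxrank_leqif_eq sub).2 mxrank_ker rank_col_0mx rank_row_mx0 !mxrank1.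
  by rewrite addnK.
rewrite -(mxrank_mul_ker P E) PE /Ker mxrank_lsubmx_sub ?capmxSr //.
by congr addn; apply/eqmx_rank/eqmxP; apply: cap_eqmx => //; apply/eqmxP.
Qed.

Section DiagonalRelation.
Variables (k1 k2 : nat) (X : 'M[F]_(k1, n)) (Y : 'M[F]_(k2, n)).
Let M := col_mx (row_mx X 0) (row_mx 0 Y).

Lemma mul_diag_relation k (K : 'M[F]_(k, k1 + k2)) :
  K *m M = row_mx (lsubmx K *m X) (rsubmx K *m Y).
Proof.
rewrite -{1}(hsubmxK K) mul_row_col !mul_mx_row !mulmx0 add_row_mx.
by rewrite addr0 add0r.
Qed.

Lemma Dom_diag_relation : (Dom M == X)%MS.
Proof.
rewrite /Dom /M -[col_mx _ _]/(block_mx X 0 0 Y) block_mxEh row_mxKl.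
by apply/eqmxP; exact: eqmx_trans (eqmx_sym (addsmxE X 0)) (addsmx0 _ _).
Qed.

Lemma Im_diag_relation : (Im M == Y)%MS.
Proof.
rewrite /Im /M -[col_mx _ _]/(block_mx X 0 0 Y) block_mxEh row_mxKr.
by apply/eqmxP; exact: eqmx_trans (eqmx_sym (addsmxE 0 Y)) (adds0mx _ _).
Qed.

Lemma Indef_diag_relation : (Indef M == Y)%MS.
Proof.
apply: Indef_eqmx => [|v /submxP [K ->]].
  apply/submxP; exists (row_mx 0 1%:M).
  by rewrite mul_diag_relation row_mxKl row_mxKr mul0mx mul1mx.
rewrite mul_diag_relation row_mxKl => ->.
by apply/submxP; exists (rsubmx K); rewrite mul_mx_row mulmx0.
Qed.

Lemma Ker_diag_relation : (Ker M == X)%MS.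
Proof.
apply: Ker_eqmx => [|v /submxP [K ->]].
  apply/submxP; exists (row_mx 1%:M 0).
  by rewrite mul_diag_relation row_mxKl row_mxKr mul0mx mul1mx.
rewrite mul_diag_relation row_mxKr => ->.
by apply/submxP; exists (lsubmx K); rewrite mul_mx_row mulmx0.
Qed.

End DiagonalRelation.

Lemma diag_mx_leq_copid_mx r :
  diag_mx (\row_(i < n) ((r <= i)%N)%:R) = copid_mx r :> 'M[F]_n.
Proof.
apply/matrixP => i j; rewrite !mxE; have [<-|neq_ij] := eqVneq i j.
  by rewrite eqxx mulr1n; case: ltnP; rewrite ?subrr ?subr0.
rewrite mulr0n; case: eqP => [/val_inj eq_ij|_]; last by rewrite subrr.
by rewrite eq_ij eqxx in neq_ij.
Qed.

Lemma diag_mx_ltn_pid_mx r :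
  diag_mx (\row_(i < n) ((i < r)%N)%:R) = pid_mx r :> 'M[F]_n.
Proof.
apply/matrixP => i j; rewrite !mxE; have [<-|neq_ij] := eqVneq i j.
  by rewrite eqxx mulr1n.
rewrite mulr0n; case: eqP => // /val_inj eq_ij.
by rewrite eq_ij eqxx in neq_ij.
Qed.

Section AdaptedBases.
Variables (a b : nat) (B B' : 'M[F]_n).
Hypothesis abn : (a + b <= n)%N.

Let an : (a <= n)%N := leq_trans (leq_addr b a) abn.

Lemma adapted_genE :
  adapted_gen a b B B' = row_mx (copid_mx a *m B) (pid_mx (a + b) *m B').
Proof. by rewrite /adapted_gen diag_mx_leq_copid_mx diag_mx_ltn_pid_mx. Qed.

Lemma pid_mx_adapted_gen :
  pid_mx a *m adapted_gen a b B B' = row_mx 0 (pid_mx a *m B') :> 'M[F]_(n, n + n).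
Proof.
rewrite adapted_genE mul_mx_row !mulmxA mul_pid_mx_copid // mul0mx mul_pid_mx.
by rewrite (minn_idPl (leq_addr b a)) (minn_idPr an).
Qed.

Lemma copid_mx_adapted_gen :
  copid_mx (a + b) *m adapted_gen a b B B' = row_mx (copid_mx (a + b) *m B) 0.
Proof.
have pid_abK : (pid_mx (a + b) : 'M[F]_n) *m (pid_mx a : 'M[F]_n) = pid_mx a.
  by rewrite mul_pid_mx (minn_idPr (leq_addr b a)) (minn_idPr an).
rewrite adapted_genE mul_mx_row !mulmxA mul_copid_mx_pid // mul0mx.
rewrite {2}/copid_mx mulmxBr mulmx1 -pid_abK mulmxA mul_copid_mx_pid //.
by rewrite mul0mx subr0.
Qed.

End AdaptedBases.

Section AdaptedRelation.
Variables (k : nat) (P : 'M[F]_(k, n + n)) (a b : nat) (B B' : 'M[F]_n).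
Hypothesis adP : adapted P a b B B'.

Lemma Dom_adapted : (Dom P == copid_mx a *m B)%MS.
Proof.
have [_ _ _ eqGP] := and4P adP.
apply/eqmxP/eqmx_sym/eqmxP.
by have := lsubmx_eqmx eqGP; rewrite adapted_genE row_mxKl.
Qed.

Lemma Im_adapted : (Im P == (pid_mx (a + b) : 'M_n) *m B')%MS.
Proof.
have [_ _ _ eqGP] := and4P adP.
apply/eqmxP/eqmx_sym/eqmxP.
by have := rsubmx_eqmx eqGP; rewrite adapted_genE row_mxKr.
Qed.

Lemma Indef_adapted : (Indef P == (pid_mx a : 'M_n) *m B')%MS.
Proof.
have [abn B_unit _ /andP [sGP sPG]] := and4P adP.
apply: Indef_eqmx => [|v /submx_trans/(_ sPG)/submxP [x ->]].
  by rewrite -(@pid_mx_adapted_gen a b B B') // (submx_trans (submxMl _ _) sGP).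
rewrite -mulmx_lsub adapted_genE row_mxKl mulmxA => x_copid_B.
have x_copid : x *m copid_mx a = 0 by rewrite -(mulmxK B_unit (_ *m _)) x_copid_B mul0mx.
have -> : x = x *m pid_mx a.
  by apply/eqP; rewrite -subr_eq0 -{1}(mulmx1 x) -mulmxBr x_copid.
by rewrite -mulmxA -adapted_genE pid_mx_adapted_gen // submxMl.
Qed.

Lemma Ker_adapted : (Ker P == copid_mx (a + b) *m B)%MS.
Proof.
have [abn _ B'_unit /andP [sGP sPG]] := and4P adP.
apply: Ker_eqmx => [|v /submx_trans/(_ sPG)/submxP [x ->]].
  by rewrite -(@copid_mx_adapted_gen a b B B') // (submx_trans (submxMl _ _) sGP).
rewrite -mulmx_rsub adapted_genE row_mxKr mulmxA => x_pid_B'.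
have x_pid : x *m (pid_mx (a + b) : 'M_n) = 0.
  by rewrite -(mulmxK B'_unit (_ *m _)) x_pid_B' mul0mx.
have -> : x = x *m copid_mx (a + b) by rewrite mulmxBr mulmx1 x_pid subr0.
by rewrite -mulmxA -adapted_genE copid_mx_adapted_gen // submxMl.
Qed.

Lemma mxrank_Indef_adapted : \rank (Indef P) = a.
Proof.
have [abn _ B'_unit _] := and4P adP.
have an : (a <= n)%N := leq_trans (leq_addr b a) abn.
by rewrite (eqmx_rank Indef_adapted) mxrankMfree ?row_free_unit // rank_pid_mx.
Qed.

Lemma mxrank_Im_adapted : \rank (Im P) = (a + b)%N.
Proof.
have [abn _ B'_unit _] := and4P adP.
by rewrite (eqmx_rank Im_adapted) mxrankMfree ?row_free_unit // rank_pid_mx.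
Qed.

End AdaptedRelation.

End LinearRelation.

Section MaximalMinors.
Variables (F : fieldType) (n : nat).
Local Notation pidn r := (pid_mx r : 'M[F]_n).

Lemma eqmx_maximal_minors r (X Y : 'M[F]_(r, n)) : (X == Y)%MS -> \rank Y = r ->
  exists2 c : F, c != 0 &
    forall U : wb n r, \det (colsub (val U) X) = c * \det (colsub (val U) Y).
Proof.
move=> eqXY rankY; have /andP [sXY _] := eqXY.
have XE : X = X *m pinvmx Y *m Y by rewrite mulmxKpV.
exists (\det (X *m pinvmx Y)).
  rewrite -unitfE -unitmxE -row_full_unit -col_leq_rank.
  by rewrite -{1}rankY -(eqmx_rank eqXY) {1}XE mxrankM_maxl.
by move=> U; rewrite {1}XE -mulmx_colsub det_mulmx.
Qed.

Lemma compound_tr m (A : 'M[F]_n) (S T : wb n m) : compound A^T S T = compound A T S.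
Proof. by rewrite /compound -det_tr; congr (\det _); apply/matrixP => i j; rewrite !mxE. Qed.

Lemma rowsub_init_wb r (rn : (r <= n)%N) :
  rowsub (val (init_wb rn)) (1%:M : 'M[F]_n) = pid_mx r.
Proof. by apply/matrixP => i j; rewrite !mxE ffunE /= ltn_ord andbT -val_eqE. Qed.

Lemma compound_init_wb r (rn : (r <= n)%N) (A : 'M[F]_n) (U : wb n r) :
  compound A (init_wb rn) U = \det (colsub (val U) ((pid_mx r : 'M_(r, n)) *m A)).
Proof.
rewrite /compound -(rowsub_init_wb rn) -rowsubE.
by congr (\det _); apply/matrixP => i j; rewrite !mxE.
Qed.

Lemma eqmx_pid_mx_rows r (rn : (r <= n)%N) (A : 'M[F]_n) :
  ((pid_mx r : 'M_(r, n)) *m A == pidn r *m A)%MS.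
Proof.
have pidK : (pid_mx r : 'M_(r, n)) = (pid_mx r : 'M_(r, n)) *m pidn r.
  by rewrite mul_pid_mx minnn (minn_idPr rn).
have pidnK : pidn r = (pid_mx r : 'M_(n, r)) *m (pid_mx r : 'M_(r, n)).
  by rewrite mul_pid_mx !minnn.
by apply/andP; split; [rewrite {1}pidK | rewrite {1}pidnK]; rewrite -mulmxA submxMl.
Qed.

Lemma compound_init_scale r (rn : (r <= n)%N) (A C : 'M[F]_n) : C \in unitmx ->
  (pidn r *m A == pidn r *m C)%MS ->
  exists2 c : F, c != 0 & forall U : wb n r,
    compound A (init_wb rn) U = c * compound C (init_wb rn) U.
Proof.
move=> C_unit eqAC.
have eqXY : ((pid_mx r : 'M_(r, n)) *m A == (pid_mx r : 'M_(r, n)) *m C)%MS.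
  by rewrite !(eqmxP (eqmx_pid_mx_rows rn A)) !(eqmxP (eqmx_pid_mx_rows rn C)).
have rankY : \rank ((pid_mx r : 'M_(r, n)) *m C) = r.
  by rewrite mxrankMfree ?row_free_unit // rank_pid_mx.
have [c c_neq0 minorsE] := eqmx_maximal_minors eqXY rankY.
by exists c => // U; rewrite !compound_init_wb.
Qed.

Lemma copid_mx_inv_pid r (rn : (r <= n)%N) (A : 'M[F]_n) k (D : 'M[F]_(k, n)) :
  A \in unitmx -> (D <= copid_mx r *m A)%MS -> D *m invmx A *m pidn r = 0.
Proof.
move=> A_unit /submxP [L ->].
by rewrite -!mulmxA mulKVmx // mul_copid_mx_pid ?mulmx0.
Qed.

(* The first r columns of A^-1 span the annihilator of the last n - r rows
   of A. *)
Lemma eqmx_pid_mx_invmx_tr r (rn : (r <= n)%N) (A C : 'M[F]_n) :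
  A \in unitmx -> C \in unitmx -> (copid_mx r *m A == copid_mx r *m C)%MS ->
  (pidn r *m (invmx A)^T == pidn r *m (invmx C)^T)%MS.
Proof.
move=> A_unit C_unit /andP [sAC _]; set E := (copid_mx r *m A)^T.
have rank_kerE : \rank (kermx E) = r.
  by rewrite mxrank_ker mxrank_tr mxrankMfree ?row_free_unit // rank_copid_mx // subKn.
have eq_kerE D : D \in unitmx -> (copid_mx r *m A <= copid_mx r *m D)%MS ->
    (pidn r *m (invmx D)^T == kermx E)%MS.
  move=> D_unit sAD.
  have sub : (pidn r *m (invmx D)^T <= kermx E)%MS.
    apply/sub_kermxP/trmx_inj; rewrite trmx0 !trmx_mul !trmxK tr_pid_mx mulmxA.
    exact: copid_mx_inv_pid.
  rewrite -(mxrank_leqif_eq sub).2 rank_kerE mxrankMfree ?rank_pid_mx //.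
  by rewrite row_free_unit unitmx_tr unitmx_inv.
rewrite !(eqmxP (eq_kerE A A_unit (submx_refl _))).
by rewrite !(eqmxP (eq_kerE C C_unit sAC)) submx_refl.
Qed.

Lemma lam_single a b (B B' : 'M[F]_n) m (T0 : wb n m) :
  (forall T, selected a b T = (T == T0)) ->
  lam a b B B' m =
  \matrix_(i, j) (compound (invmx B) (enum_val i) T0 * compound B' T0 (enum_val j)).
Proof.
move=> selT0; apply/matrixP => i j; rewrite !mxE /lamf (bigD1 T0) ?selT0 ?eqxx //=.
by rewrite big1 ?addr0 // => T /negbTE neq_T; rewrite selT0 neq_T mulr0.
Qed.

Lemma lam_scale_init m (mn : (m <= n)%N) a b a' b' (B B' C C' : 'M[F]_n) :
  B \in unitmx -> C \in unitmx -> C' \in unitmx ->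
  (forall T : wb n m, selected a b T = (T == init_wb mn)) ->
  (forall T : wb n m, selected a' b' T = (T == init_wb mn)) ->
  (copid_mx m *m B == copid_mx m *m C)%MS -> (pidn m *m B' == pidn m *m C')%MS ->
  exists2 c : F, c != 0 & lam a b B B' m = c *: lam a' b' C C' m.
Proof.
move=> B_unit C_unit C'_unit selB selC eqBC eqB'C'.
have [c1 c1_neq0 rowE] := compound_init_scale mn C'_unit eqB'C'.
have invC_unit : (invmx C)^T \in unitmx by rewrite unitmx_tr unitmx_inv.
have [c2 c2_neq0 colE] :=
  compound_init_scale mn invC_unit (eqmx_pid_mx_invmx_tr mn B_unit C_unit eqBC).
exists (c2 * c1); first by rewrite mulf_neq0.
rewrite (lam_single _ _ selB) (lam_single _ _ selC); apply/matrixP => i j.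
rewrite !mxE -[compound (invmx B) _ _]compound_tr -[compound (invmx C) _ _]compound_tr.
by rewrite colE rowE mulrACA.
Qed.

End MaximalMinors.

Section LambdaOfRelation.
Variables (F : fieldType) (n : nat).
Implicit Types k m : nat.

Lemma lam_neq0 k (P : 'M[F]_(k, n + n)) a b B B' m : adapted P a b B B' ->
  (lam a b B B' m != 0) = (a <= m <= a + b)%N.
Proof.
move=> adP; have [abn B_unit B'_unit _] := and4P adP.
have an := leq_trans (leq_addr b a) abn.
rewrite -mxrank_eq0 rank_lam // mxrank_eq0 selection_mx_eq0 negbK.
apply/existsP/idP => [[T /(selected_bounds an abn)] // | bounds].
have mn : (m <= n)%N by case/andP: bounds => _ /leq_trans; apply.
by exists (init_wb mn); apply: selected_init.
Qed.

Lemma lam_rank1_Indef k (P : 'M[F]_(k, n + n)) m : m = \rank (Indef P) -> lam_rank1 m P.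
Proof.
move=> mP a b B B' adP; have [abn B_unit B'_unit _] := and4P adP.
have an := leq_trans (leq_addr b a) abn.
have m_a : m = a by rewrite mP (mxrank_Indef_adapted adP).
have mn : (m <= n)%N by rewrite m_a.
rewrite rank_lam // (@selection_mx_delta _ _ _ _ _ (init_wb mn)) ?mxrank_delta // => T.
exact: selected_bottom.
Qed.

Lemma lam_rank1_Im k (P : 'M[F]_(k, n + n)) m : m = \rank (Im P) -> lam_rank1 m P.
Proof.
move=> mP a b B B' adP; have [abn B_unit B'_unit _] := and4P adP.
have an := leq_trans (leq_addr b a) abn.
have m_ab : m = (a + b)%N by rewrite mP (mxrank_Im_adapted adP).
have mn : (m <= n)%N by rewrite m_ab.
rewrite rank_lam // (@selection_mx_delta _ _ _ _ _ (init_wb mn)) ?mxrank_delta // => T.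
exact: selected_top.
Qed.

Lemma lam_prop_Indef_Dom k k' (P : 'M[F]_(k, n + n)) (Q : 'M[F]_(k', n + n)) m :
  m = \rank (Indef P) -> (Indef Q == Indef P)%MS -> (Dom Q == Dom P)%MS -> lam_prop m P Q.
Proof.
move=> mP eqI eqD a b B B' a' b' C C' adP adQ.
have [abn B_unit _ _] := and4P adP; have [abn' C_unit C'_unit _] := and4P adQ.
have an := leq_trans (leq_addr b a) abn; have an' := leq_trans (leq_addr b' a') abn'.
have m_a : m = a by rewrite mP (mxrank_Indef_adapted adP).
have m_a' : m = a' by rewrite mP -(eqmx_rank eqI) (mxrank_Indef_adapted adQ).
have mn : (m <= n)%N by rewrite m_a.
have eDP := Dom_adapted adP; have eDQ := Dom_adapted adQ.
have eIP := Indef_adapted adP; have eIQ := Indef_adapted adQ.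
rewrite -m_a in eDP eIP; rewrite -m_a' in eDQ eIQ.
apply: (lam_scale_init (mn := mn)) => // [T|T||].
- exact: selected_bottom.
- exact: selected_bottom.
- by rewrite -!(eqmxP eDP) -!(eqmxP eDQ) !(eqmxP eqD) submx_refl.
- by rewrite -!(eqmxP eIP) -!(eqmxP eIQ) !(eqmxP eqI) submx_refl.
Qed.

Lemma lam_prop_Im_Ker k k' (P : 'M[F]_(k, n + n)) (R : 'M[F]_(k', n + n)) m :
  m = \rank (Im P) -> (Im R == Im P)%MS -> (Ker R == Ker P)%MS -> lam_prop m P R.
Proof.
move=> mP eqI eqK a b B B' a' b' C C' adP adR.
have [abn B_unit _ _] := and4P adP; have [abn' C_unit C'_unit _] := and4P adR.
have an := leq_trans (leq_addr b a) abn; have an' := leq_trans (leq_addr b' a') abn'.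
have m_ab : m = (a + b)%N by rewrite mP (mxrank_Im_adapted adP).
have m_ab' : m = (a' + b')%N by rewrite mP -(eqmx_rank eqI) (mxrank_Im_adapted adR).
have mn : (m <= n)%N by rewrite m_ab.
have eKP := Ker_adapted adP; have eKR := Ker_adapted adR.
have eIP := Im_adapted adP; have eIR := Im_adapted adR.
rewrite -m_ab in eKP eIP; rewrite -m_ab' in eKR eIR.
apply: (lam_scale_init (mn := mn)) => // [T|T||].
- exact: selected_top.
- exact: selected_top.
- by rewrite -!(eqmxP eKP) -!(eqmxP eKR) !(eqmxP eqK) submx_refl.
- by rewrite -!(eqmxP eIP) -!(eqmxP eIR) !(eqmxP eqI) submx_refl.
Qed.

End LambdaOfRelation.

Theorem lemma1p3 (F : fieldType) (n k : nat) (P : 'M[F]_(k, n + n)) (m : nat) :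
  \rank P = n ->
  (* (a) *)
  lam_nonzero_iff m P ((\rank (Indef P) <= m)%N && (m <= \rank (Im P))%N)
  (* (b) *)
  /\ (m = \rank (Indef P) ->
        lam_rank1 m P
        /\ (forall k' (Q : 'M[F]_(k', n + n)), \rank Q = n ->
              (Indef Q == Indef P)%MS -> (Dom Q == Dom P)%MS -> lam_prop m P Q)
        /\ (\rank (DomIndef P) = n /\ lam_prop m P (DomIndef P)))
  (* (c) *)
  /\ (m = \rank (Im P) ->
        lam_rank1 m P
        /\ (forall k' (R : 'M[F]_(k', n + n)), \rank R = n ->
              (Im R == Im P)%MS -> (Ker R == Ker P)%MS -> lam_prop m P R)
        /\ (\rank (KerIm P) = n /\ lam_prop m P (KerIm P))).
Proof.
move=> rankP; split.
  move=> a b B B' adP.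
  by rewrite (lam_neq0 _ adP) (mxrank_Indef_adapted adP) (mxrank_Im_adapted adP).
have rank_DomIndef : \rank (DomIndef P) = n.
  by rewrite (rank_diag_block_mx (Dom P)) mxrank_Dom_Indef.
have rank_KerIm : \rank (KerIm P) = n.
  by rewrite (rank_diag_block_mx (Ker P)) addnC mxrank_Im_Ker.
split=> mP; do !split => //.
- exact: lam_rank1_Indef.
- by move=> k' Q _; apply: lam_prop_Indef_Dom.
- exact: lam_prop_Indef_Dom mP (Indef_diag_relation _ _) (Dom_diag_relation _ _).
- exact: lam_rank1_Im.
- by move=> k' R _; apply: lam_prop_Im_Ker.
- exact: lam_prop_Im_Ker mP (Im_diag_relation _ _) (Ker_diag_relation _ _).
Qed.
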